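(* Let $m,n\geq 2$ be integers, where any cycle $C_m$ or $C_n$ appearing below is assumed to have length at least $3$, and let $T_n$ ($T_m$) denote any tree of order $n$ ($m$). Then: 1. $C_{cc}(K_m\Box K_n)=\max\{m,n\}$. 2. $C_{cc}(K_m\Box C_n)=\max\{n,\ mn-2m\}$. 3. $C_{cc}(K_m\Box T_n)=\max\{n,\ mn-m\}$. 4. $C_{cc}(C_m\Box C_n)=\max\{mn-2n,\ mn-2m\}$. 5. $C_{cc}(C_m\Box T_n)=\max\{mn-2n,\ mn-m\}$. 6. $C_{cc}(T_m\Box T_n)=\max\{mn-n,\ mn-m\}$.
   Context: All graphs are finite, simple and undirected. $K_\ell$ is the complete graph, $C_\ell$ the cycle, of order $\ell$. For a graph $G$ and $S\subseteq V(G)$, the cycle interval $\langle S\rangle$ consists of the vertices of $S$ together with every vertex $w\in V(G)\setminus S$ such that $G[S\cup\{w\}]$ contains a cycle through $w$; $S$ is cycle convex if $\langle S\rangle=S$. The cycle convexity number $C_{cc}(G)$ is the maximum cardinality of a proper (i.e. $\neq V(G)$) cycle convex subset of $V(G)$. The Cartesian product $G\Box H$ has vertex set $V(G)\times V(H)$, with $(g_1,h_1)\sim(g_2,h_2)$ iff ($g_1\sim g_2$ and $h_1=h_2$) or ($g_1=g_2$ and $h_1\sim h_2$). *)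

From mathcomp Require Import all_boot.
Set Implicit Arguments. Unset Strict Implicit. Unset Printing Implicit Defensive.

Section Graphs.
Variable T : finType.
Implicit Types (e : rel T) (S : {set T}).

Definition simple_graph e := symmetric e /\ irreflexive e.

(* w lies on a cycle of the induced subgraph G[S :|: [set w]]:
   distinct vertices w, v1, ..., vk (k >= 2), all vi in S, with consecutive
   vertices adjacent and vk adjacent to w. *)
Definition cycle_through e S w :=
  exists p : seq T, [/\ 2 <= size p, uniq (w :: p), all (fun v => v \in S) p,
                        path e w p & e (last w p) w].

(* S is cycle convex: <S> = S, i.e. no vertex outside S lies on a cycle of
   G[S u {w}] through w. *)
Definition cycle_convex e S := forall w, w \notin S -> ~ cycle_through e S w.

Definition Ccc_is e (k : nat) :=
  (exists S, [/\ S != [set: T], cycle_convex e S & #|S| = k]) /\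
  (forall S, S != [set: T] -> cycle_convex e S -> #|S| <= k).

Definition connected_graph e := forall x y, connect e x y.

Definition acyclic e := forall w, ~ cycle_through e [set: T] w.

Definition is_tree e := [/\ simple_graph e, connected_graph e & acyclic e].
End Graphs.

Definition cartesian (T1 T2 : finType) (e1 : rel T1) (e2 : rel T2) : rel (T1 * T2) :=
  fun x y => (e1 x.1 y.1 && (x.2 == y.2)) || ((x.1 == y.1) && e2 x.2 y.2).

Definition Kgraph (n : nat) : rel 'I_n := fun i j => i != j.

(* cycle C_n on 'I_n (used for n >= 3) *)
Definition Cgraph (n : nat) : rel 'I_n :=
  fun i j => (j == (i.+1 %% n) :> nat) || (i == (j.+1 %% n) :> nat).
Arguments Kgraph n : clear implicits.
Arguments Cgraph n : clear implicits.

From mathcomp Require Import all_boot zify.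
Set Implicit Arguments. Unset Strict Implicit. Unset Printing Implicit Defensive.

(* A proper cycle convex set S of G □ H cannot contain both a full G-layer and a
   full H-layer: walking from these layers along paths of G and H, a vertex missing
   from S would close a 4-cycle with three vertices of S.  Hence all H-layers of S,
   or all its G-layers, are proper cycle convex sets of the factor, which bounds |S|
   by max(|G| c(H), c(G) |H|) once c bounds the proper cycle convex sets of each
   factor.  Conversely A × V(H) is cycle convex whenever every vertex outside A has
   at most one neighbour in A, as a cycle through a vertex uses two of its
   neighbours.  In K_n, C_n and a tree such sets (one vertex, all but two adjacent
   vertices, all but a leaf) attain c = 1, n - 2, n - 1. *)

Section CycleConvexity.
Variables (T : finType) (e : rel T).
Implicit Types (A S : {set T}).

Lemma cycle_through_subset S S' w :
  S \subset S' -> cycle_through e S w -> cycle_through e S' w.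
Proof.
move=> sSS' [p [? ? /allP pS ? ?]]; exists p; split=> //.
by apply/allP=> v /pS; apply: (subsetP sSS').
Qed.

Lemma cycle_through_neighbours S w : symmetric e -> cycle_through e S w ->
  exists x y, [/\ x \in S, y \in S, x != y, e w x & e w y].
Proof.
move=> sym [[|x [|z q]] [//= _ /andP [_ /andP [xNzq _]] /and3P [xS zS /allP qS]]].
case/andP=> ewx _ ezqw; exists x, (last z q); split=> //.
- by have := mem_last z q; rewrite inE => /orP [/eqP -> | /qS].
- by apply: contraNneq xNzq => ->; apply: mem_last.
- by rewrite sym.
Qed.

Definition pendant_set A :=
  forall a, a \notin A -> {in A &, forall x y, e a x -> e a y -> x = y}.

Lemma pendant_set1 x : pendant_set [set x].
Proof. by move=> a _ y z; rewrite !inE => /eqP -> /eqP ->. Qed.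

Lemma pendant_set_cycle_convex A : symmetric e -> pendant_set A -> cycle_convex e A.
Proof.
move=> sym pA w wA /(cycle_through_neighbours sym) [x [y [xA yA /eqP xy ewx ewy]]].
exact: xy (pA w wA x y xA yA ewx ewy).
Qed.

Lemma card_proper_set A : A != setT -> #|A| <= #|T| - 1.
Proof. by rewrite -properT => /proper_card; rewrite cardsT; lia. Qed.

Definition pendant_extremal k := exists A, [/\ A != setT, pendant_set A, #|A| = k &
  forall S, S != setT -> cycle_convex e S -> #|S| <= k].

Lemma acyclic_first_neighbour w z q u : symmetric e -> acyclic e ->
  uniq (w :: z :: q) -> path e w (z :: q) -> e w u -> u \in z :: q -> u = z.
Proof.
move=> sym ac uniq_wzq path_wzq ewu; rewrite inE => /orP [/eqP // | uq].
case/splitPr: uq uniq_wzq path_wzq => q1 q2 uniq_wzq path_wzq; exfalso.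
apply: (ac w); exists (z :: rcons q1 u); split.
- by rewrite /= size_rcons.
- by move: uniq_wzq; rewrite -cat_rcons -!cat_cons cat_uniq => /andP [].
- by apply/allP => v _; rewrite inE.
- by move: path_wzq; rewrite -cat_rcons -cat_cons cat_path => /andP [].
- by rewrite /= last_rcons sym.
Qed.

(* The leaf is the start of a path that cannot be extended backwards. *)
Lemma acyclic_leaf (w0 : T) : simple_graph e -> acyclic e ->
  exists v, forall x y, e v x -> e v y -> x = y.
Proof.
move=> [sym irr] ac.
suff leaf_from k w p : uniq (w :: p) -> path e w p -> #|T| - size p <= k ->
    exists v, forall x y, e v x -> e v y -> x = y.
  by apply: (leaf_from #|T| w0 [::]); rewrite ?subn0.
elim: k w p => [|k IH] w p uniq_wp path_wp.
  move=> size_p; have := max_card (mem (w :: p)).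
  by rewrite (card_uniqP uniq_wp) /= ltnNge -subn_eq0 -leqn0 size_p.
move=> size_p; case: (pickP [pred u | e w u & u \notin p]) => [u /andP [ewu up] | in_p].
  apply: (IH u (w :: p)); last by rewrite /= subnS -subn1 leq_subLR add1n.
  - rewrite /= inE negb_or up andbT; apply/andP; split => //.
    by apply: contraTneq ewu => ->; rewrite irr.
  - by rewrite /= sym ewu.
have nbr_in_p u : e w u -> u \in p.
  by move=> ewu; apply: contraFT (in_p u) => up; rewrite /= ewu.
exists w => x y ewx ewy.
case: p uniq_wp path_wp nbr_in_p {size_p in_p} => [|z q] uniq_wp path_wp nbr_in_p.
  by have := nbr_in_p x ewx.
by rewrite (acyclic_first_neighbour sym ac uniq_wp path_wp ewx (nbr_in_p x ewx))
  (acyclic_first_neighbour sym ac uniq_wp path_wp ewy (nbr_in_p y ewy)).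
Qed.

Lemma acyclic_pendant_extremal : simple_graph e -> acyclic e -> 0 < #|T| ->
  pendant_extremal (#|T| - 1).
Proof.
move=> sg ac /card_gt0P [w0 _]; have [v leaf] := acyclic_leaf w0 sg ac.
exists (~: [set v]); split.
- by apply/eqP => /setP /(_ v); rewrite !inE eqxx.
- by move=> a; rewrite !inE negbK => /eqP -> x y _ _; apply: leaf.
- by have := cardsC [set v]; rewrite cards1; lia.
- by move=> S /card_proper_set.
Qed.

End CycleConvexity.

Section Cartesian.
Variables (T1 T2 : finType) (e1 : rel T1) (e2 : rel T2).
Local Notation G := (cartesian e1 e2).
Implicit Types S : {set T1 * T2}.

Definition Hlayer S g := [set h | (g, h) \in S].
Definition Glayer S h := [set g | (g, h) \in S].

Lemma cartesian_sym : symmetric e1 -> symmetric e2 -> symmetric G.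
Proof.
move=> sym1 sym2 [a b] [c d]; rewrite /cartesian /= sym1 sym2.
by rewrite [b == d]eq_sym [a == c]eq_sym.
Qed.

Lemma cycle_through_Hlayer S g h :
  cycle_through e2 (Hlayer S g) h -> cycle_through G S (g, h).
Proof.
move=> [p [size_p uniq_hp /allP pS path_hp last_p]]; exists (map (pair g) p); split.
- by rewrite size_map.
- by rewrite -(map_cons (pair g)) map_inj_uniq // => x y [].
- by apply/allP=> _ /mapP [v /pS vS ->]; rewrite inE in vS.
- elim: p h path_hp {size_p uniq_hp pS last_p} => //= x p IH h /andP [ehx path_xp].
  by rewrite IH // /cartesian /= eqxx ehx orbT.
- by rewrite last_map /cartesian /= eqxx last_p orbT.
Qed.

Lemma cycle_through_Glayer S g h :
  cycle_through e1 (Glayer S h) g -> cycle_through G S (g, h).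
Proof.
move=> [p [size_p uniq_gp /allP pS path_gp last_p]]; exists (map (pair^~ h) p); split.
- by rewrite size_map.
- by rewrite -(map_cons (pair^~ h)) map_inj_uniq // => x y [].
- by apply/allP=> _ /mapP [v /pS vS ->]; rewrite inE in vS.
- elim: p g path_gp {size_p uniq_gp pS last_p} => //= x p IH g /andP [egx path_xp].
  by rewrite IH // /cartesian /= eqxx egx.
- by rewrite last_map /cartesian /= eqxx last_p.
Qed.

Lemma cycle_convex_Hlayer S g : cycle_convex G S -> cycle_convex e2 (Hlayer S g).
Proof. by move=> cvS h; rewrite inE => ghNS /cycle_through_Hlayer; apply: cvS. Qed.

Lemma cycle_convex_Glayer S h : cycle_convex G S -> cycle_convex e1 (Glayer S h).
Proof. by move=> cvS g; rewrite inE => ghNS /cycle_through_Glayer; apply: cvS. Qed.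

Lemma pendant_setXT A : pendant_set e1 A -> pendant_set G (setX A [set: T2]).
Proof.
move=> pA [a b]; rewrite !inE andbT => aA [x1 x2] [y1 y2]; rewrite !inE !andbT => xA yA.
have [ax ay] : (a == x1) = false /\ (a == y1) = false.
  by split; apply: contraNF aA => /eqP ->.
rewrite /cartesian /= ax ay !orbF => /andP [eax /eqP <-] /andP [eay /eqP <-].
by rewrite (pA a aA x1 y1 xA yA eax eay).
Qed.

Lemma pendant_setTX B : pendant_set e2 B -> pendant_set G (setX [set: T1] B).
Proof.
move=> pB [a b]; rewrite !inE => bB [x1 x2] [y1 y2]; rewrite !inE => xB yB.
have [bx by_] : (b == x2) = false /\ (b == y2) = false.
  by split; apply: contraNF bB => /eqP ->.
rewrite /cartesian /= bx by_ !andbF /= => /andP [/eqP <- ebx] /andP [/eqP <- eby].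
by rewrite (pB b bB x2 y2 xB yB ebx eby).
Qed.

Lemma cycle_convex_square S a b x y : simple_graph e1 -> simple_graph e2 ->
  cycle_convex G S -> e1 x a -> e2 y b ->
  (x, b) \in S -> (x, y) \in S -> (a, y) \in S -> (a, b) \in S.
Proof.
move=> [sym1 irr1] [sym2 irr2] cvS exa eyb xbS xyS ayS.
apply/negPn/negP => /cvS; apply; exists [:: (x, b); (x, y); (a, y)].
have [xa yb] : x != a /\ y != b.
  by split; [apply: contraTneq exa => ->; rewrite irr1
            | apply: contraTneq eyb => ->; rewrite irr2].
split=> //.
- by rewrite /= !inE !xpair_eqE !eqxx [a == x]eq_sym [b == y]eq_sym (negbTE xa) (negbTE yb).
- by rewrite /= xbS xyS ayS.
- have [eax eby] : e1 a x /\ e2 b y by rewrite sym1 sym2.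
  by rewrite /= /cartesian /= !eqxx eax eby exa !orbT.
- by rewrite /= /cartesian /= !eqxx eyb orbT.
Qed.

Lemma cycle_convex_full_layers S g h :
  simple_graph e1 -> simple_graph e2 -> connected_graph e1 -> connected_graph e2 ->
  cycle_convex G S -> Hlayer S g = setT -> Glayer S h = setT -> S = setT.
Proof.
move=> sg1 sg2 cn1 cn2 cvS /setP Sg /setP Sh; apply/setP => -[a b]; rewrite inE.
have [p1 path_p1 ->] := connectP (cn1 g a).
elim/last_ind: p1 path_p1 b => [_ b | p1 a' IH1]; first by have := Sg b; rewrite !inE.
rewrite rcons_path last_rcons => /andP [path_p1 ea'] b.
have [p2 path_p2 ->] := connectP (cn2 h b).
elim/last_ind: p2 path_p2 => [_ | p2 b' IH2]; first by have := Sh a'; rewrite !inE.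
rewrite rcons_path last_rcons => /andP [path_p2 eb'].
by apply: (cycle_convex_square sg1 sg2 cvS ea' eb'); [apply: IH1 | apply: IH1 | apply: IH2].
Qed.

Lemma card_set_pairs S : #|S| = \sum_(g : T1) \sum_(h : T2) ((g, h) \in S : nat).
Proof.
rewrite -sum1_card big_mkcond pair_bigA.
by apply: eq_bigr => -[g h] _; case: ((g, h) \in S).
Qed.

Lemma card_Hlayers S : #|S| = \sum_g #|Hlayer S g|.
Proof.
rewrite card_set_pairs; apply: eq_bigr => g _.
by rewrite -sum1_card [RHS]big_mkcond; apply: eq_bigr => h _; rewrite inE.
Qed.

Lemma card_Glayers S : #|S| = \sum_h #|Glayer S h|.
Proof.
rewrite card_set_pairs exchange_big; apply: eq_bigr => h _.
by rewrite -sum1_card [RHS]big_mkcond; apply: eq_bigr => g _; rewrite inE.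
Qed.

Hypotheses (sg1 : simple_graph e1) (sg2 : simple_graph e2).
Hypotheses (cn1 : connected_graph e1) (cn2 : connected_graph e2).

(* By [cycle_convex_full_layers], a proper convex set misses a vertex of every
   H-layer or of every G-layer. *)
Lemma card_cycle_convex_cartesian k1 k2 S :
  (forall F : {set T1}, F != setT -> cycle_convex e1 F -> #|F| <= k1) ->
  (forall F : {set T2}, F != setT -> cycle_convex e2 F -> #|F| <= k2) ->
  S != setT -> cycle_convex G S -> #|S| <= maxn (k1 * #|T2|) (#|T1| * k2).
Proof.
move=> bound1 bound2 SnT cvS.
case: (boolP [exists g, Hlayer S g == setT]) => [/existsP [g /eqP Sg] | /existsPn HnT].
  case: (boolP [exists h, Glayer S h == setT]) => [/existsP [h /eqP Sh] | /existsPn GnT].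
    by move: SnT; rewrite (cycle_convex_full_layers sg1 sg2 cn1 cn2 cvS Sg Sh) eqxx.
  rewrite leq_max card_Glayers mulnC -sum_nat_const; apply/orP; left.
  by apply: leq_sum => h _; apply: bound1 (GnT h) (cycle_convex_Glayer cvS).
rewrite leq_max card_Hlayers -sum_nat_const; apply/orP; right.
by apply: leq_sum => g _; apply: bound2 (HnT g) (cycle_convex_Hlayer cvS).
Qed.

Theorem Ccc_cartesian k1 k2 : pendant_extremal e1 k1 -> pendant_extremal e2 k2 ->
  Ccc_is G (maxn (k1 * #|T2|) (#|T1| * k2)).
Proof.
move=> [A [AnT pA cardA bound1]] [B [BnT pB cardB bound2]].
have /properP [_ [a _ aNA]] : A \proper setT by rewrite properT.
have /properP [_ [b _ bNB]] : B \proper setT by rewrite properT.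
have symG := cartesian_sym sg1.1 sg2.1.
split; last by move=> S; apply: card_cycle_convex_cartesian.
rewrite /maxn; case: ltnP => _.
- exists (setX [set: T1] B); split.
  + by apply/eqP => /setP /(_ (a, b)); rewrite !inE (negbTE bNB).
  + exact/pendant_set_cycle_convex/pendant_setTX.
  + by rewrite cardsX cardsT cardB.
- exists (setX A [set: T2]); split.
  + by apply/eqP => /setP /(_ (a, b)); rewrite !inE (negbTE aNA).
  + exact/pendant_set_cycle_convex/pendant_setXT.
  + by rewrite cardsX cardsT cardA.
Qed.

End Cartesian.

Lemma Kgraph_simple n : simple_graph (Kgraph n).
Proof. by split=> [i j|i]; rewrite /Kgraph ?eqxx // eq_sym. Qed.

Lemma Kgraph_connected n : connected_graph (Kgraph n).
Proof.
move=> i j; case: (eqVneq i j) => [-> | ij]; first exact: connect0.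
exact: connect1.
Qed.

Lemma card_cycle_convex_Kgraph n (F : {set 'I_n}) :
  F != setT -> cycle_convex (Kgraph n) F -> #|F| <= 1.
Proof.
move=> FnT cvF; have /properP [_ [a _ aNF]] : F \proper setT by rewrite properT.
rewrite leqNgt; apply/card_gt1P => -[x [y [xF yF xy]]].
have [ax ay] : a != x /\ a != y by split; apply: contraNneq aNF => ->.
apply: (cvF a aNF); exists [:: x; y]; split=> //=.
- by rewrite !inE negb_or ax ay xy.
- by rewrite xF yF.
- by rewrite /Kgraph ax xy.
- by rewrite /Kgraph eq_sym.
Qed.

Lemma Kgraph_pendant_extremal n : 1 < n -> pendant_extremal (Kgraph n) 1.
Proof.
move=> n_gt1; exists [set Ordinal (ltnW n_gt1)]; split.
- by apply/eqP => /setP /(_ (Ordinal n_gt1)); rewrite !inE -val_eqE.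
- exact: pendant_set1.
- exact: cards1.
- exact: card_cycle_convex_Kgraph.
Qed.

Lemma modS_ord n (i : 'I_n) :
  (i.+1 %% n = i.+1 /\ i.+1 < n) \/ (i.+1 %% n = 0 /\ i.+1 = n).
Proof.
have := ltn_ord i; rewrite leq_eqVlt => /orP [/eqP -> | lt_in].
  by right; rewrite modnn.
by left; rewrite modn_small.
Qed.

Lemma Cgraph_cases n (i j : 'I_n) : Cgraph n i j ->
  ((j : nat) = i.+1 /\ i.+1 < n) \/ ((j : nat) = 0 /\ i.+1 = n) \/
  ((i : nat) = j.+1 /\ j.+1 < n) \/ ((i : nat) = 0 /\ j.+1 = n).
Proof.
case/orP => /eqP ->; first by case: (modS_ord i) => -[-> ?]; tauto.
by case: (modS_ord j) => -[-> ?]; tauto.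
Qed.

Lemma Cgraph_simple n : 1 < n -> simple_graph (Cgraph n).
Proof.
move=> n_gt1; split=> [i j | i]; first by rewrite /Cgraph orbC.
by rewrite /Cgraph orbb; apply/eqP; case: (modS_ord i) => -[-> ?]; lia.
Qed.

Section CycleWalk.
Variables (n : nat) (n_gt0 : 0 < n).

Definition Cwalk (a : 'I_n) k : 'I_n := Ordinal (ltn_pmod (a + k) n_gt0).

Lemma Cwalk0 a : Cwalk a 0 = a.
Proof. by apply: val_inj; rewrite /= addn0 modn_small. Qed.

Lemma Cwalkn a : Cwalk a n = a.
Proof. by apply: val_inj; rewrite /= modnDr modn_small. Qed.

Lemma Cgraph_Cwalk a k : Cgraph n (Cwalk a k) (Cwalk a k.+1).
Proof.
by apply/orP; left; rewrite /= -[((a + k) %% n).+1]addn1 modnDml addn1 addnS.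
Qed.

Lemma path_Cwalk a s k : path (Cgraph n) (Cwalk a s) (map (Cwalk a) (iota s.+1 k)).
Proof. by elim: k s => //= k IH s; rewrite Cgraph_Cwalk IH. Qed.

Lemma last_Cwalk a s k : last (Cwalk a s) (map (Cwalk a) (iota s.+1 k)) = Cwalk a (s + k).
Proof. by elim: k s => [|k IH] s /=; rewrite ?addn0 // IH addSnnS. Qed.

Lemma Cwalk_inj a : {in iota 0 n &, injective (Cwalk a)}.
Proof.
move=> i j; rewrite !mem_iota !add0n => lt_in lt_jn /(congr1 val) /= /eqP.
by rewrite eqn_modDl !modn_small // => /eqP.
Qed.

Lemma Cgraph_connected : connected_graph (Cgraph n).
Proof.
move=> i j; apply/connectP; exists (map (Cwalk i) (iota 1 (n + j - i))).
  by rewrite -{1}(Cwalk0 i) path_Cwalk.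
rewrite -{1}(Cwalk0 i) last_Cwalk add0n; apply: val_inj => /=.
have -> : i + (n + j - i) = j + n by have := ltn_ord i; lia.
by rewrite modnDr modn_small.
Qed.

Lemma Cgraph_cycle_through a : 2 < n -> cycle_through (Cgraph n) [set x | x != a] a.
Proof.
move=> n_gt2; exists (map (Cwalk a) (iota 1 n.-1)).
have uniq_walk : uniq (a :: map (Cwalk a) (iota 1 n.-1)).
  have iota_n : iota 0 n = 0 :: iota 1 n.-1 by rewrite -{1}(prednK n_gt0).
  rewrite -{1}(Cwalk0 a) -map_cons -iota_n map_inj_in_uniq ?iota_uniq //.
  exact: Cwalk_inj.
split=> //.
- by rewrite size_map size_iota; lia.
- apply/allP => v v_walk; rewrite inE; apply: contraTneq uniq_walk => va.
  by rewrite /= -{1}va v_walk.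
- by rewrite -{1}(Cwalk0 a) path_Cwalk.
- rewrite -{1}(Cwalk0 a) last_Cwalk add0n -{2}(Cwalkn a).
  by have := Cgraph_Cwalk a n.-1; rewrite prednK.
Qed.

End CycleWalk.

(* A proper convex set missing only one vertex a would contain the rest of the
   Hamiltonian cycle through a. *)
Lemma card_cycle_convex_Cgraph n (F : {set 'I_n}) : 2 < n ->
  F != setT -> cycle_convex (Cgraph n) F -> #|F| <= n - 2.
Proof.
move=> n_gt2 FnT cvF; have /properP [_ [a _ aNF]] : F \proper setT by rewrite properT.
rewrite leqNgt; apply/negP => F_big; apply: (cvF a aNF).
apply: cycle_through_subset (Cgraph_cycle_through (ltnW (ltnW n_gt2)) a n_gt2).
apply/subsetP => x; rewrite inE => xa; apply: contraT => xNF.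
have : [set a; x] \subset ~: F by apply/subsetP => y; rewrite !inE => /orP [] /eqP ->.
move/subset_leq_card; rewrite cards2 eq_sym xa.
by have := cardsC F; rewrite card_ord; lia.
Qed.

Lemma Cgraph_pendant_extremal n : 2 < n -> pendant_extremal (Cgraph n) (n - 2).
Proof.
move=> n_gt2; have n_gt1 := ltnW n_gt2.
pose i0 : 'I_n := Ordinal (ltnW n_gt1); pose i1 : 'I_n := Ordinal n_gt1.
exists (~: [set i0; i1]); split.
- by apply/eqP => /setP /(_ i0); rewrite !inE eqxx.
- move=> a; rewrite !inE negbK -!val_eqE /= => a_le1 x y.
  rewrite !inE !negb_or -!val_eqE /= => /andP [x0 x1] /andP [y0 y1].
  move=> /Cgraph_cases ax /Cgraph_cases ay; apply: ord_inj.
  by have := ltn_ord x; have := ltn_ord y; lia.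
- have := cardsC [set i0; i1]; rewrite cards2 card_ord -val_eqE /=; lia.
- by move=> F; apply: card_cycle_convex_Cgraph.
Qed.

Theorem mainTheorem13 (m n : nat) (hm : 2 <= m) (hn : 2 <= n) :
  (* 1 *) Ccc_is (cartesian (Kgraph m) (Kgraph n)) (maxn m n) /\
  (* 2 *) (3 <= n -> Ccc_is (cartesian (Kgraph m) (Cgraph n)) (maxn n (m * n - 2 * m))) /\
  (* 3 *) (forall (Tn : finType) (tn : rel Tn), is_tree tn -> #|Tn| = n ->
             Ccc_is (cartesian (Kgraph m) tn) (maxn n (m * n - m))) /\
  (* 4 *) (3 <= m -> 3 <= n ->
             Ccc_is (cartesian (Cgraph m) (Cgraph n)) (maxn (m * n - 2 * n) (m * n - 2 * m))) /\
  (* 5 *) (3 <= m -> forall (Tn : finType) (tn : rel Tn), is_tree tn -> #|Tn| = n ->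
             Ccc_is (cartesian (Cgraph m) tn) (maxn (m * n - 2 * n) (m * n - m))) /\
  (* 6 *) (forall (Tm Tn : finType) (tm : rel Tm) (tn : rel Tn),
             is_tree tm -> #|Tm| = m -> is_tree tn -> #|Tn| = n ->
             Ccc_is (cartesian tm tn) (maxn (m * n - n) (m * n - m))).
Proof.
have Ccc_eq (T : finType) (e : rel T) k k' : Ccc_is e k -> k = k' -> Ccc_is e k'.
  by move=> + <-.
have [Km Kn] := (Kgraph_pendant_extremal hm, Kgraph_pendant_extremal hn).
have [sKm sKn] := (Kgraph_simple m, Kgraph_simple n).
have [cKm cKn] := (@Kgraph_connected m, @Kgraph_connected n).
have [sCm sCn] := (Cgraph_simple hm, Cgraph_simple hn).
have [cCm cCn] := (Cgraph_connected (ltnW hm), Cgraph_connected (ltnW hn)).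
split; [|split; [|split; [|split; [|split]]]].
- apply: Ccc_eq (Ccc_cartesian sKm sKn cKm cKn Km Kn) _.
  by rewrite !card_ord; lia.
- move=> n_gt2; have Cn := Cgraph_pendant_extremal n_gt2.
  apply: Ccc_eq (Ccc_cartesian sKm sCn cKm cCn Km Cn) _.
  by rewrite !card_ord; nia.
- move=> Tn tn [sg cn ac] card_Tn; subst n.
  have Tn_ext := acyclic_pendant_extremal sg ac (ltnW hn).
  apply: Ccc_eq (Ccc_cartesian sKm sg cKm cn Km Tn_ext) _.
  by rewrite card_ord; nia.
- move=> m_gt2 n_gt2.
  have [Cm Cn] := (Cgraph_pendant_extremal m_gt2, Cgraph_pendant_extremal n_gt2).
  apply: Ccc_eq (Ccc_cartesian sCm sCn cCm cCn Cm Cn) _.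
  by rewrite !card_ord; nia.
- move=> m_gt2 Tn tn [sg cn ac] card_Tn; subst n.
  have Cm := Cgraph_pendant_extremal m_gt2.
  have Tn_ext := acyclic_pendant_extremal sg ac (ltnW hn).
  apply: Ccc_eq (Ccc_cartesian sCm sg cCm cn Cm Tn_ext) _.
  by rewrite card_ord; nia.
- move=> Tm Tn tm tn [sgm cnm acm] card_Tm [sgn cnn acn] card_Tn; subst m n.
  have Tm_ext := acyclic_pendant_extremal sgm acm (ltnW hm).
  have Tn_ext := acyclic_pendant_extremal sgn acn (ltnW hn).
  apply: Ccc_eq (Ccc_cartesian sgm sgn cnm cnn Tm_ext Tn_ext) _.
  by nia.
Qed.
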